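(* Let $p$ be a prime and $M$, $N$ integers with $p^2>N\ge1$. The linear complexity $L_p(M;N)$ of the sequence $q_p(u)$, $u=M+1,\ldots,M+N$ (viewed as elements of $\mathbb{F}_p$), satisfies $$L_p(M;N)\ge\min\Big\{\frac{p-1}{2},\,\frac{N-p-1}{3}\Big\}.$$
   Context: For a prime $p$ and an integer $u$ with $\gcd(u,p)=1$, the Fermat quotient $q_p(u)$ is the unique integer with $q_p(u)\equiv (u^{p-1}-1)/p \pmod p$ and $0\le q_p(u)\le p-1$; also $q_p(kp)=0$ for all $k\in\mathbb{Z}$. The linear complexity of an $N$-element sequence $s_0,\ldots,s_{N-1}$ in a ring $\mathcal{R}$ is the smallest $L$ such that $s_{u+L}=c_{L-1}s_{u+L-1}+\cdots+c_0s_u$ for all $0\le u\le N-L-1$, for some $c_0,\ldots,c_{L-1}\in\mathcal{R}$. *)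

From HB Require Import structures.
From mathcomp Require Import all_boot all_order all_algebra.
Set Implicit Arguments. Unset Strict Implicit. Unset Printing Implicit Defensive.
Import Order.TTheory GRing.Theory Num.Theory.
Local Open Scope ring_scope.

(* Fermat quotient q_p(u) for u : int, as an integer in [0, p-1]:
   q_p(u) = ((u^(p-1) - 1)/p) mod p if p does not divide u, and 0 if p | u.
   (For p not dividing u, p divides u^(p-1)-1, so the division is exact.) *)
Definition fermat_quotient (p : nat) (u : int) : int :=
  if (p%:Z %| u)%Z then 0
  else (((u ^+ p.-1 - 1) %/ p%:Z)%Z %% p%:Z)%Z.

Definition has_lin_rec (R : finComNzRingType) (N : nat) (s : nat -> R) (L : nat) : bool :=
  [exists c : {ffun 'I_L -> R},
    [forall u : 'I_N, ((u + L < N)%N) ==>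
       (s (u + L)%N == \sum_(i < L) c i * s (u + i)%N)]].

Lemma has_lin_rec_N (R : finComNzRingType) (N : nat) (s : nat -> R) :
  exists L, has_lin_rec N s L.
Proof.
exists N; apply/existsP; exists [ffun=> 0]; apply/forallP => u.
by rewrite ltnNge leq_addl.
Qed.

Definition linear_complexity (R : finComNzRingType) (N : nat) (s : nat -> R) : nat :=
  ex_minn (has_lin_rec_N N s).

Definition fq_seq (p : nat) (M : int) : nat -> 'F_p :=
  fun k => (fermat_quotient p (M + 1 + k%:Z))%:~R.

From HB Require Import structures.
From mathcomp Require Import all_boot all_order all_algebra finfield ring lra zify.
Import Order.TTheory GRing.Theory Num.Theory.
Local Open Scope ring_scope.

(* In F_p, shifting the argument by p changes the Fermat quotient by -1/u, because
   (u + p)^(p-1) = u^(p-1) - p u^(p-2) mod p^2. Subtracting a linear recurrence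
   sum_j d_j s_(u+j) = 0 of length L at u from the same recurrence at u + p gives
   sum_j d_j / (M + 1 + u + j) = 0 for 2L + 2 consecutive values of u whenever
   N >= 3L + p + 2. If also 2L + 2 <= p these are 2L + 2 distinct points of F_p,
   each a zero or a pole of the rational function sum_j d_j / (X + j); but its
   numerator is nonzero of degree at most L and it has L + 1 poles. *)

Lemma exprD_mod_sqr {R : comNzRingType} (a b : R) n :
  exists T, (a + b) ^+ n = a ^+ n + n%:R * b * a ^+ n.-1 + b ^+ 2 * T.
Proof.
elim: n => [|[|n] [T IH]]; first by exists 0; rewrite !expr0; ring.
  by exists 0; rewrite expr1 expr0; ring.
by exists (a * T + n.+1%:R * a ^+ n + b * T); rewrite exprS IH /= !exprS; ring.
Qed.

Section PrimeField.

Variable p : nat.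
Hypothesis p_pr : prime p.

Let pchar_p : p \in [pchar 'F_p] := pchar_Fp p_pr.
Let p_Fp0 : (p%:R : 'F_p) = 0 := pchar_Fp_0 p_pr.
Let p_intr0 : ((p%:Z)%:~R : 'F_p) = 0 := pchar_Fp_0 p_pr.

Lemma natr_Fp_inj a b : (a < p)%N -> (b < p)%N -> (a%:R : 'F_p) = b%:R -> a = b.
Proof.
move=> a_lt b_lt /(congr1 (fun x : 'F_p => x : nat)).
by rewrite !val_Fp_nat // !modn_small.
Qed.

Lemma intr_Fp_modz (z : int) : ((z %% p)%Z%:~R : 'F_p) = z%:~R.
Proof.
by rewrite {2}(divz_eq z p) [in RHS]intrD [in RHS]intrM p_intr0 mulr0 add0r.
Qed.

Lemma expr_Fp_pred (x : 'F_p) : x != 0 -> x ^+ p.-1 = 1.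
Proof.
move=> x_neq0; apply: (mulfI x_neq0).
rewrite -exprS prednK ?prime_gt0 // mulr1.
by have := expf_card x; rewrite card_Fp.
Qed.

(* When p | u both sides vanish, the right one through the junk value 0^-1 = 0. *)
Lemma fermat_quotient_addp (u : int) :
  ((fermat_quotient p (u + p%:Z))%:~R - (fermat_quotient p u)%:~R : 'F_p)
    = - (u%:~R)^-1.
Proof.
rewrite /fermat_quotient !(dvdz_pcharf pchar_p) intrD p_intr0 addr0.
set x : 'F_p := u%:~R; have [-> | x_neq0] := eqVneq x 0.
  by rewrite invr0 subrr oppr0.
set e := p.-1.
have e_gt0 : (0 < e)%N by rewrite -ltnS prednK ?prime_gt0 ?prime_gt1.
have dvd_pow (v : int) : v%:~R = x -> (p %| v ^+ e - 1)%Z.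
  move=> vx; rewrite (dvdz_pcharf pchar_p) rmorphB rmorphXn rmorph1 /= vx.
  by rewrite expr_Fp_pred ?subrr.
have [T expand] := exprD_mod_sqr u p%:Z e.
have quot_diff : (((u + p%:Z) ^+ e - 1) %/ p)%Z - ((u ^+ e - 1) %/ p)%Z
    = e%:R * u ^+ e.-1 + p%:Z * T.
  have p_neq0 : p%:Z != 0 by rewrite eqz_nat -lt0n prime_gt0.
  have dvd_u := dvd_pow u erefl.
  have dvd_up : (p %| (u + p%:Z) ^+ e - 1)%Z.
    by apply: dvd_pow; rewrite intrD p_intr0 addr0.
  by apply: (mulIf p_neq0); rewrite mulrBl !divzK // expand; ring.
rewrite !intr_Fp_modz -intrB quot_diff intrD !intrM p_intr0 mul0r addr0.
have -> : ((e%:R : int)%:~R : 'F_p) = -1.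
  apply/eqP; rewrite rmorph_nat -subr_eq0 opprK natr1.
  by rewrite (prednK (prime_gt0 p_pr)) p_Fp0.
rewrite rmorphXn /= mulN1r; congr (- _); apply: (mulfI x_neq0).
by rewrite -exprS (prednK e_gt0) expr_Fp_pred // divff.
Qed.

End PrimeField.

Section PartialFractions.

Context {K : fieldType} {n : nat} {a d : 'I_n -> K} {i0 : 'I_n}.
Hypotheses (a_inj : injective a) (d_i0 : d i0 != 0).

Lemma sum_frac_roots_lt (ts : seq K) :
  uniq ts -> {in ts, forall t, forall j, t + a j != 0} ->
  {in ts, forall t, \sum_j d j / (t + a j) = 0} -> (size ts < n)%N.
Proof.
move=> ts_uniq ts_reg ts_root.
pose G i := \prod_(j | j != i) ('X + (a j)%:P).
pose F := \sum_i d i *: G i.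
have XaC_neq0 j : 'X + (a j)%:P != 0 by rewrite -size_poly_eq0 size_XaddC.
have hornerG i t : (G i).[t] = \prod_(j | j != i) (t + a j).
  by rewrite horner_prod; apply: eq_bigr => j _; rewrite hornerD hornerX hornerC.
have size_F : (size F <= n)%N.
  apply: leq_trans (size_sum _ _ _) _; apply/bigmax_leqP => i _.
  apply: leq_trans (size_scale_leq _ _) _; rewrite size_prod //.
  rewrite (eq_bigr (fun _ => 2%N)) => [|j _]; last by rewrite size_XaddC.
  by rewrite sum_nat_const cardC1 card_ord; have := ltn_ord i0; lia.
have F_neq0 : F != 0.
  apply/eqP => F0; have : F.[- a i0] = 0 by rewrite F0 horner0.
  rewrite horner_sum (bigD1 i0) //= big1 => [|i i_neq]; last first.
    by rewrite hornerZ hornerG (bigD1 i0) 1?eq_sym //= addNr mul0r mulr0.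
  rewrite addr0 hornerZ hornerG => /eqP; rewrite mulf_eq0 (negPf d_i0) /=.
  apply/negP; rewrite prodf_seq_neq0; apply/allP => j _; apply/implyP => j_neq.
  by rewrite addrC subr_eq0; apply: contra j_neq => /eqP/a_inj ->.
have F_roots : all (root F) ts.
  apply/allP => t t_ts; rewrite /root.
  pose P := \prod_j (t + a j).
  have hornerGt i : (G i).[t] = P / (t + a i).
    by rewrite hornerG /P [in RHS](bigD1 i) //=; field; apply: ts_reg.
  rewrite horner_sum (eq_bigr (fun i => P * (d i / (t + a i)))) => [|i _].
    by rewrite -mulr_sumr ts_root // mulr0.
  by rewrite hornerZ hornerGt; field; apply: ts_reg.
exact: leq_trans (max_poly_roots F_neq0 F_roots ts_uniq) size_F.
Qed.

Lemma sum_frac_vanishing_lt (ts : seq K) :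
  uniq ts ->
  {in ts, forall t, (forall j, t + a j != 0) -> \sum_j d j / (t + a j) = 0} ->
  (size ts < n + n)%N.
Proof.
move=> ts_uniq ts_root; pose pole t := [exists j, t + a j == 0].
have poles_le : (size [seq t <- ts | pole t] <= n)%N.
  apply: (@leq_trans (size [seq - a j | j <- enum 'I_n])); last first.
    by rewrite size_map size_enum_ord.
  apply: uniq_leq_size; first exact: filter_uniq.
  move=> t; rewrite mem_filter => /andP[/existsP[j /eqP tj0] _].
  by apply/mapP; exists j; rewrite ?mem_enum //; apply/eqP; rewrite -addr_eq0 tj0.
have regular_lt : (size [seq t <- ts | ~~ pole t] < n)%N.
  apply: sum_frac_roots_lt; first exact: filter_uniq.
    by move=> t; rewrite mem_filter => /andP[/existsPn reg _] j; apply: reg.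
  move=> t; rewrite mem_filter => /andP[/existsPn reg t_ts].
  by apply: ts_root => // j; apply: reg.
by rewrite -(count_predC pole) -!size_filter -addnS leq_add.
Qed.

End PartialFractions.

Lemma has_lin_rec_annihilator (R : finComNzRingType) N (s : nat -> R) L :
  has_lin_rec N s L ->
  exists2 d : 'I_L.+1 -> R, d ord_max = -1 &
    forall u, (u + L < N)%N -> \sum_(j < L.+1) d j * s (u + j)%N = 0.
Proof.
case/existsP=> c /forallP c_rec.
exists (fun j => oapp c (-1) (unlift ord_max j)); first by rewrite unlift_none.
move=> u uL_lt; have u_lt : (u < N)%N by apply: leq_ltn_trans uL_lt; apply: leq_addr.
have /implyP/(_ uL_lt)/eqP rec_u := c_rec (Ordinal u_lt).
rewrite big_ord_recr /= unlift_none mulN1r rec_u.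
apply/eqP; rewrite subr_eq0; apply/eqP.
apply: eq_bigr => j _; have -> : widen_ord (leqnSn L) j = lift ord_max j.
  exact/val_inj/esym/lift_max.
by rewrite liftK.
Qed.

Lemma fq_seq_addp p M k : prime p ->
  fq_seq p M (k + p) - fq_seq p M k = - ((M + 1 + k%:Z)%:~R)^-1.
Proof. by move=> p_pr; rewrite /fq_seq PoszD addrA fermat_quotient_addp. Qed.

Lemma fq_seq_annihilator_frac p M N L (d : 'I_L.+1 -> 'F_p) u : prime p ->
  (forall v, (v + L < N)%N -> \sum_(j < L.+1) d j * fq_seq p M (v + j) = 0) ->
  (u + p + L < N)%N ->
  \sum_(j < L.+1) d j / ((M + 1 + u%:Z)%:~R + j%:R) = 0.
Proof.
move=> p_pr d_rec upL_lt.
have /eqP : \sum_(j < L.+1) d j * (fq_seq p M (u + j + p) - fq_seq p M (u + j)) = 0.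
  under eq_bigr => j _ do rewrite mulrBr addnAC.
  rewrite sumrB !d_rec ?subrr //.
  by apply: leq_ltn_trans upL_lt; rewrite leq_add2r leq_addr.
rewrite -oppr_eq0 -sumrN => /eqP sum0; rewrite -[RHS]sum0; apply: eq_bigr => j _.
by rewrite fq_seq_addp // mulrN opprK PoszD addrA [in RHS]intrD.
Qed.

Lemma fq_seq_lin_rec_bound {p : nat} {M : int} {N L : nat} :
  prime p -> has_lin_rec N (fq_seq p M) L ->
  (p <= 2 * L + 1)%N || (N <= 3 * L + p + 1)%N.
Proof.
move=> p_pr /has_lin_rec_annihilator[d d_max d_rec].
rewrite leqNgt [(N <= _)%N]leqNgt -negb_and; apply/negP => /andP[p_big N_big].
have nat_inj a b :
    (a < 2 * L + 2)%N -> (b < 2 * L + 2)%N -> (a%:R : 'F_p) = b%:R -> a = b.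
  by move=> a_lt b_lt; apply: natr_Fp_inj; lia.
pose ts := [seq (M + 1 + u%:Z)%:~R : 'F_p | u <- iota 0 (L.+1 + L.+1)].
have ts_uniq : uniq ts.
  rewrite map_inj_in_uniq ?iota_uniq // => u v; rewrite !mem_iota /= => u_lt v_lt.
  by rewrite !intrD => /addrI; apply: nat_inj; lia.
have a_inj : injective (fun j : 'I_L.+1 => j%:R : 'F_p).
  move=> i j /nat_inj ij; apply/val_inj/ij.
    by have := ltn_ord i; lia.
  by have := ltn_ord j; lia.
have d_neq0 : d ord_max != 0 by rewrite d_max oppr_eq0 oner_eq0.
suff : (size ts < L.+1 + L.+1)%N by rewrite size_map size_iota ltnn.
apply: (sum_frac_vanishing_lt a_inj d_neq0 _ ts_uniq).
move=> t /mapP[u]; rewrite mem_iota => /= u_lt -> _.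
by apply: fq_seq_annihilator_frac d_rec _; lia.
Qed.

Theorem theorem14 (p : nat) (M : int) (N : nat) :
  prime p -> (1 <= N)%N -> (N < p ^ 2)%N ->
  Num.min ((p%:R - 1) / 2 : rat) ((N%:R - p%:R - 1) / 3)
    <= (linear_complexity N (fq_seq p M))%:R.
Proof.
move=> p_pr _ _; rewrite /linear_complexity; case: ex_minnP => L L_rec _.
rewrite ge_min; case/orP: (fq_seq_lin_rec_bound p_pr L_rec) => [p_le | N_le].
  by move: p_le; rewrite -(ler_nat rat) !natrD => ?; apply/orP; left; lra.
by move: N_le; rewrite -(ler_nat rat) !natrD => ?; apply/orP; right; lra.
Qed.
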